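(* Let $G=(V,E)$ be a finite, simple, connected reflective graph and $x\in V$. Assume the subgraph induced on $S_1(x)$ is connected. Then $S_1(x)$ is isometric.
   Context: $d$ is the combinatorial distance, $S_n(x)=\{v:d(v,x)=n\}$. For adjacent $x\sim y$ let $V_x^y=\{v: d(v,x)<d(v,y)\}$, $V^{xy}=\{v:d(v,x)=d(v,y)\}$. A reflection from $x$ to $y$ is a graph automorphism $\phi$ with $\phi\circ\phi=\mathrm{id}$, $\phi(x)=y$, such that the edges between $V_x^y$ and $V_y^x$ are exactly $\{\{x',\phi(x')\}:x'\in V_x^y\}$ and $\phi$ fixes $V^{xy}$ pointwise. A graph is reflective if every edge admits a reflection. A set $W\subseteq V$ is isometric if for all $w,w'\in W$ there is a shortest path in $G$ from $w$ to $w'$ all of whose vertices lie in $W$. *)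

From mathcomp Require Import all_boot.
Set Implicit Arguments. Unset Strict Implicit. Unset Printing Implicit Defensive.

Definition simple_graph (T : finType) (e : rel T) : Prop :=
  symmetric e /\ irreflexive e.

Section Graph.
Variables (T : finType) (e : rel T).

Definition walkb (n : nat) (x y : T) : bool :=
  [exists p : n.-tuple T, path e x p && (last x p == y)].

(* combinatorial distance: least n with a walk of length n from x to y
   (a shortest walk has length < #|T| when it exists; #|T| if unreachable). *)
Definition gdist (x y : T) : nat :=
  find (fun n => walkb n x y) (iota 0 #|T|).

Definition connected_graph : Prop :=
  forall x y : T, exists p : seq T, path e x p /\ last x p = y.

Definition sphere (n : nat) (x : T) : {set T} := [set v | gdist v x == n].

Definition Vside (x y : T) : {set T} := [set v | gdist v x < gdist v y].
Definition Vmid (x y : T) : {set T} := [set v | gdist v x == gdist v y].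

Definition involutive_automorphism (phi : T -> T) : Prop :=
  (forall v, phi (phi v) = v) /\ (forall u v, e (phi u) (phi v) = e u v).

Definition reflection (phi : T -> T) (x y : T) : Prop :=
  [/\ involutive_automorphism phi,
      phi x = y,
      (forall u, u \in Vside x y -> phi u \in Vside y x /\ e u (phi u)),
      (forall u v, u \in Vside x y -> v \in Vside y x -> e u v -> v = phi u)
    & forall v, v \in Vmid x y -> phi v = v].

Definition reflective : Prop :=
  forall x y : T, e x y -> exists phi : T -> T, reflection phi x y.

Definition induced_connected (W : {set T}) : Prop :=
  forall u v, u \in W -> v \in W ->
    exists p : seq T, [/\ path e u p, last u p = v & all (mem W) p].

Definition isometric (W : {set T}) : Prop :=
  forall w w', w \in W -> w' \in W ->
    exists p : seq T, [/\ path e w p, last w p = w', size p = gdist w w'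
                       & all (mem W) p].
End Graph.

From mathcomp Require Import all_boot.
Set Implicit Arguments. Unset Strict Implicit. Unset Printing Implicit Defensive.

(* Any two neighbours of x are at distance at most 2, through x, and it suffices to show that two
   non-adjacent neighbours a, b of x joined by a path inside S_1(x) have a
   common neighbour in S_1(x).  Walk along the path from a: if a ~ u and u, b
   have a common neighbour y in S_1(x) not adjacent to a, the reflection phi
   swapping y and b fixes x (at distance 1 from both) and a (at distance 2 from
   both); hence phi u is adjacent to phi x = x, phi a = a and phi y = b, i.e. it
   is a common neighbour of a and b in S_1(x). *)

Section Distance.
Variables (T : finType) (e : rel T).
Hypothesis e_irr : irreflexive e.

Lemma uniq_size_le_card (s : seq T) : uniq s -> size s <= #|T|.
Proof. by move=> s_uniq; rewrite -(card_uniqP s_uniq) max_card. Qed.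

Lemma walkb0 u v : walkb e 0 u v = (u == v).
Proof.
apply/existsP/eqP => [[[[|//]]] /= _ /eqP //|<-].
by exists [tuple]; rewrite /= eqxx.
Qed.

Lemma walkb1 u v : walkb e 1 u v = e u v.
Proof.
apply/existsP/idP => [[[[|w [|//]]]] //= _ /andP[/andP[euw _] /eqP <-] //|euv].
by exists [tuple v]; rewrite /= euv eqxx.
Qed.

Lemma walkb2 u w v : e u w -> e w v -> walkb e 2 u v.
Proof. by move=> euw ewv; apply/existsP; exists [tuple w; v]; rewrite /= euw ewv eqxx. Qed.

Lemma gdist_walkb u v : gdist e u v < #|T| -> walkb e (gdist e u v) u v.
Proof.
move=> lt_dT; have has_walk : has (fun n => walkb e n u v) (iota 0 #|T|).
  by rewrite has_find size_iota.
by have := nth_find 0 has_walk; rewrite nth_iota.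
Qed.

Lemma gdist_shortest n u v : n < #|T| -> walkb e n u v ->
  (forall m, m < n -> ~~ walkb e m u v) -> gdist e u v = n.
Proof.
move=> lt_nT walk_n no_shorter.
have [lt_dn|lt_nd|//] := ltngtP (gdist e u v) n.
- by have := gdist_walkb (ltn_trans lt_dn lt_nT); rewrite (negPf (no_shorter _ lt_dn)).
- by have := before_find 0 lt_nd; rewrite nth_iota // walk_n.
Qed.

Lemma gdist0 u : gdist e u u = 0.
Proof.
apply: gdist_shortest => //; last by rewrite walkb0.
exact: (@uniq_size_le_card [:: u]).
Qed.

Lemma adj_neq u v : e u v -> u != v.
Proof. by apply: contraTneq => ->; rewrite e_irr. Qed.

Lemma gdist1 u v : e u v -> gdist e u v = 1.
Proof.
move=> euv; have neq_uv := adj_neq euv.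
apply: gdist_shortest; rewrite ?walkb1 //; last by case=> // _; rewrite walkb0.
by apply: (@uniq_size_le_card [:: u; v]); rewrite /= inE neq_uv.
Qed.

Lemma gdist2 u w v : u != v -> ~~ e u v -> e u w -> e w v -> gdist e u v = 2.
Proof.
move=> neq_uv neuv euw ewv.
apply: gdist_shortest (walkb2 euw ewv) _.
  apply: (@uniq_size_le_card [:: u; w; v]).
  by rewrite /= !inE negb_or neq_uv (adj_neq euw) (adj_neq ewv).
by case=> [|[|]] // _; rewrite ?walkb0 ?walkb1.
Qed.

Lemma sphere1E x v : (v \in sphere e 1 x) = e v x.
Proof.
rewrite inE; apply/eqP/idP => [d_vx|]; last exact: gdist1.
have neq_vx : v != x by apply: contra_eq_neq d_vx => ->; rewrite gdist0.
have lt_dT : gdist e v x < #|T|.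
  by rewrite d_vx (@uniq_size_le_card [:: v; x]) //= inE neq_vx.
by have := gdist_walkb lt_dT; rewrite d_vx walkb1.
Qed.

Definition close_in (W : {set T}) (a b : T) : bool :=
  [|| a == b, e a b | [exists y in W, e a y && e y b]].

Lemma close_in_mid (W : {set T}) a y b : y \in W -> e a y -> e y b -> close_in W a b.
Proof. by move=> yW eay eyb; apply/or3P/Or33/exists_inP; exists y; rewrite ?eay. Qed.

Lemma close_in_shortest_path (W : {set T}) a b : b \in W -> close_in W a b ->
  exists p : seq T, [/\ path e a p, last a p = b, size p = gdist e a b
                      & all (mem W) p].
Proof.
move=> bW; rewrite /close_in.
case: (eqVneq a b) => [<- _|neq_ab /=].
  by exists [::]; rewrite gdist0.
case eab: (e a b) => /=.
  by move=> _; exists [:: b]; rewrite /= eab bW gdist1.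
case/exists_inP => y yW /andP[eay eyb].
exists [:: y; b]; rewrite /= eay eyb yW bW (gdist2 neq_ab _ eay eyb) ?eab //.
Qed.

End Distance.

Section Sphere.
Variables (T : finType) (e : rel T) (x : T).
Hypotheses (e_sym : symmetric e) (e_irr : irreflexive e) (e_refl : reflective e).
Local Notation S := (sphere e 1 x).

Lemma reflection_fixes_common_neighbour y b phi :
  reflection e phi y b -> e y x -> e b x -> phi x = x.
Proof.
move=> [_ _ _ _ fix_mid] eyx ebx.
by apply: fix_mid; rewrite inE !(gdist1 e_irr) // e_sym.
Qed.

Lemma sphere1_common_neighbour a u y b :
  a \in S -> u \in S -> y \in S -> b \in S ->
  e a u -> e u y -> e y b -> a != b -> ~~ e a b -> a != y -> ~~ e a y ->
  close_in e S a b.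
Proof.
rewrite !(sphere1E e_irr) => eax eux eyx ebx eau euy eyb neq_ab neab neq_ay neay.
have [phi refl_phi] := e_refl eyb.
have [[_ phi_adj] phi_y _ _ fix_mid] := refl_phi.
have phi_x : phi x = x by exact: reflection_fixes_common_neighbour refl_phi eyx ebx.
have phi_a : phi a = a.
  have exy : e x y by rewrite e_sym.
  have exb : e x b by rewrite e_sym.
  apply: fix_mid; rewrite inE (gdist2 e_irr neq_ay neay eax exy).
  by rewrite (gdist2 e_irr neq_ab neab eax exb).
apply: (close_in_mid (y := phi u)); first by rewrite (sphere1E e_irr) -phi_x phi_adj.
  by rewrite -{1}phi_a phi_adj.
by rewrite -phi_y phi_adj.
Qed.

Lemma close_in_sphere1_edge a u b : a \in S -> u \in S -> b \in S ->
  e a u -> close_in e S u b -> close_in e S a b.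
Proof.
move=> aS uS bS eau.
have [<-|neq_ab] := eqVneq a b; first by rewrite /close_in eqxx.
have [eab|neab] := boolP (e a b); first by rewrite /close_in eab orbT.
case/or3P => [/eqP <-|eub|/exists_inP [y yS /andP[euy eyb]]].
- by rewrite /close_in eau orbT.
- exact: close_in_mid uS eau eub.
have [eq_ay|neq_ay] := eqVneq a y; first by rewrite eq_ay eyb in neab.
have [eay|neay] := boolP (e a y); first exact: close_in_mid yS eay eyb.
exact: sphere1_common_neighbour aS uS yS bS eau euy eyb neq_ab neab neq_ay neay.
Qed.

Lemma close_in_sphere1_path a p : a \in S -> path e a p -> all (mem S) p ->
  close_in e S a (last a p).
Proof.
elim: p a => [|u p IH] a aS /=; first by rewrite /close_in eqxx.
case/andP=> eau walk_p /andP[uS in_S].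
have /allP all_S : all (mem S) (u :: p) by rewrite /= uS.
exact: close_in_sphere1_edge aS uS (all_S _ (mem_last u p)) eau (IH u uS walk_p in_S).
Qed.

End Sphere.

Theorem lemma2p10 (T : finType) (e : rel T) (x : T) :
  simple_graph e -> connected_graph e -> reflective e ->
  induced_connected e (sphere e 1 x) ->
  isometric e (sphere e 1 x).
Proof.
move=> [e_sym e_irr] _ e_refl S_conn w w' wS w'S.
have [p [walk_p last_p in_S]] := S_conn w w' wS w'S.
apply: (close_in_shortest_path e_irr w'S); rewrite -last_p.
exact: (close_in_sphere1_path e_sym e_irr e_refl wS walk_p in_S).
Qed.
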